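(* Let $q \geq 5$ be a prime power and let $\mathcal{X}$ be a plane curve of degree $q-1$ defined over $\mathbb{F}_q$ without $\mathbb{F}_q$-linear components with $\mathrm{N}_q(\mathcal{X}) = (q-1)^2$. Then the set $\mathcal{X}(\mathbb{F}_q) \subseteq \mathbb{P}^2(\mathbb{F}_q)$ is a $((q-1)^2, q-1)$-arc.
   Context: $\mathcal{X}(\mathbb{F}_q) = \mathcal{X} \cap \mathbb{P}^2(\mathbb{F}_q)$ and $\mathrm{N}_q(\mathcal{X}) = \#\mathcal{X}(\mathbb{F}_q)$. ''Without $\mathbb{F}_q$-linear components'' means no line defined over $\mathbb{F}_q$ is a component. A $(k,n)$-arc in $\mathbb{P}^2(\mathbb{F}_q)$ is a set of $k$ points such that every line of $\mathbb{P}^2(\mathbb{F}_q)$ contains at most $n$ of its points and some line contains exactly $n$ of its points. *)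

From HB Require Import structures.
From mathcomp Require Import all_boot all_order all_algebra all_field.
From mathcomp Require Import mpoly.
Set Implicit Arguments. Unset Strict Implicit. Unset Printing Implicit Defensive.
Import GRing.Theory.
Local Open Scope ring_scope.

(* Points of P^2(F) are represented by normalized homogeneous coordinates:
   nonzero vectors of F^3 whose first nonzero coordinate is 1. Each point
   of P^2(F) has exactly one such representative. *)
Definition normalized (F : fieldType) (v : 'I_3 -> F) : bool :=
  [exists i : 'I_3, [&& v i == 1 & [forall j : 'I_3, (j < i)%N ==> (v j == 0)]]].

Definition P2 (F : finFieldType) : {set {ffun 'I_3 -> F}} :=
  [set v : {ffun 'I_3 -> F} | normalized v].

(* Lines of P^2(F): given by a normalized coefficient vector a,
   the line a_0 X_0 + a_1 X_1 + a_2 X_2 = 0. *)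
Definition on_line (F : fieldType) (a v : 'I_3 -> F) : bool :=
  \sum_(i < 3) a i * v i == 0.

Definition linform (F : fieldType) (a : 'I_3 -> F) : {mpoly F[3]} :=
  \sum_(i < 3) (a i)%:MP * 'X_i.

Definition mdivides (F : fieldType) (p q : {mpoly F[3]}) : Prop :=
  exists r : {mpoly F[3]}, q = p * r.

Definition no_Fq_linear_component (F : finFieldType) (P : {mpoly F[3]}) : Prop :=
  forall a : 'I_3 -> F, (exists i, a i != 0) -> ~ mdivides (linform a) P.

Definition rat_points (F : finFieldType) (P : {mpoly F[3]}) : {set {ffun 'I_3 -> F}} :=
  [set v in P2 F | P.@[v] == 0].

Definition is_arc (F : finFieldType) (S : {set {ffun 'I_3 -> F}}) (k n : nat) : Prop :=
  [/\ S \subset P2 F, #|S| = k,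
      (forall a : {ffun 'I_3 -> F}, a \in P2 F ->
          #|[set v in S | on_line a v]| <= n)%N &
      exists2 a : {ffun 'I_3 -> F}, a \in P2 F & #|[set v in S | on_line a v]| = n].

(* If a line met X(F_q) in more than q - 1 points, the restriction of the
   degree q - 1 form P to that line would be a binary form of degree q - 1 with
   more than q - 1 zeros on P^1(F_q); it would vanish identically, so the line
   would divide P.  Hence every line carries at most q - 1 rational points.  If
   none carried exactly q - 1, the at most q + 1 lines through a fixed rational
   point p would each carry at most q - 3 further points, and
   (q - 1)^2 <= 1 + (q + 1)(q - 3) is false. *)

From HB Require Import structures.
From mathcomp Require Import all_boot all_order all_algebra all_field.
From mathcomp Require Import mpoly.
From mathcomp Require Import ring zify.
Set Implicit Arguments. Unset Strict Implicit. Unset Printing Implicit Defensive.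
Import GRing.Theory.
Local Open Scope ring_scope.

Section MmapFacts.
Variables (n : nat) (R : nzRingType).
Implicit Types (p : {mpoly R[n]}).

Lemma mmap_ext (S : nzRingType) (f f' : R -> S) (h h' : 'I_n -> S) p :
  f =1 f' -> h =1 h' -> mmap f h p = mmap f' h' p.
Proof.
move=> ef eh; apply: eq_bigr => m _; rewrite ef; congr (_ * _).
exact: mmap1_eq.
Qed.

Lemma rmorph_mmap (S S' : comNzRingType) (psi : {rmorphism S -> S'})
    (f : R -> S) (h : 'I_n -> S) p :
  psi (mmap f h p) = mmap (fun x => psi (f x)) (fun i => psi (h i)) p.
Proof.
rewrite rmorph_sum; apply: eq_bigr => m _; rewrite rmorphM rmorph_prod.
by congr (_ * _); apply: eq_bigr => i _; rewrite rmorphXn.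
Qed.

Lemma mmap_homog (S : comNzRingType) (f : R -> S) (h : 'I_n -> S) (x : S) d p :
  p \is d.-homog -> mmap f (fun i => x * h i) p = x ^+ d * mmap f h p.
Proof.
move=> /dhomogP hp; rewrite /mmap mulr_sumr big_seq [RHS]big_seq.
apply: eq_bigr => m /hp md; rewrite /mmap1.
under eq_bigr => i _ do rewrite exprMn.
rewrite big_split /= prodrXr -mdegE md; ring.
Qed.

End MmapFacts.

Lemma meval_homog n (R : comNzRingType) (p : {mpoly R[n]}) d (x : R) (v : 'I_n -> R) :
  p \is d.-homog -> p.@[fun l => x * v l] = x ^+ d * p.@[v].
Proof. exact: mmap_homog. Qed.

Lemma mmap_X_id n (R : comNzRingType) (p : {mpoly R[n]}) :
  mmap (@mpolyC n R) (fun i => 'X_i) p = p.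
Proof.
rewrite [RHS]mpolyE; apply: eq_bigr => m _.
by rewrite mmap1_id mul_mpolyC.
Qed.

Section Divides.
Variables (R : comPzRingType) (L : R).
Implicit Types x y : R.

Definition divides x := exists r, x = L * r.

Lemma divides0 : divides 0.
Proof. by exists 0; rewrite mulr0. Qed.

Lemma dividesD x y : divides x -> divides y -> divides (x + y).
Proof. by move=> [r ->] [s ->]; exists (r + s); rewrite mulrDr. Qed.

Lemma dividesMl x y : divides x -> divides (y * x).
Proof. by move=> [r ->]; exists (y * r); ring. Qed.

Lemma divides_prodB (I : Type) (s : seq I) (G H : I -> R) :
  (forall i, divides (G i - H i)) ->
  divides (\prod_(i <- s) G i - \prod_(i <- s) H i).
Proof.
move=> dGH; elim: s => [|i s IHs]; first by rewrite !big_nil subrr; exact: divides0.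
rewrite !big_cons.
have -> : G i * \prod_(j <- s) G j - H i * \prod_(j <- s) H j =
    (\prod_(j <- s) G j) * (G i - H i) +
    H i * (\prod_(j <- s) G j - \prod_(j <- s) H j) by ring.
by apply: dividesD; apply: dividesMl.
Qed.

Lemma divides_exprB x y k : divides (x - y) -> divides (x ^+ k - y ^+ k).
Proof.
have powE z : z ^+ k = \prod_(0 <= i < k) z by rewrite prodr_const_nat subn0.
by move=> dxy; rewrite !powE; apply: divides_prodB.
Qed.

End Divides.

Lemma divides_mmapB n (R : comNzRingType) (L : {mpoly R[n]}) (s : 'I_n -> {mpoly R[n]}) p :
  (forall i, divides L ('X_i - s i)) -> divides L (p - mmap (@mpolyC n R) s p).
Proof.
move=> dXs; rewrite -{1}(mmap_X_id p) /mmap -sumrB.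
elim: (msupp p) => [|m r IHr]; first by rewrite big_nil; exact: divides0.
rewrite big_cons; apply: dividesD => //; rewrite -mulrBr; apply: dividesMl.
by apply: divides_prodB => i; apply: divides_exprB.
Qed.

Section DegLeCoef.
Variable R : nzRingType.
Implicit Types (p q : {poly R}) (b c e : R).

Definition deg_le_coef p n e := (size p <= n.+1)%N /\ p`_n = e.

Lemma deg_le_coefM p q n m e e' :
  deg_le_coef p n e -> deg_le_coef q m e' -> deg_le_coef (p * q) (n + m) (e * e').
Proof.
move=> [sp cp] [sq cq]; split; first by have := size_polyMleq p q; lia.
rewrite coefM (bigD1 (Ordinal (leq_addr m n : (n < (n + m).+1)%N))) //=.
rewrite addKn cp cq big1 ?addr0 // => -[l hl] /= /eqP/val_eqP /= nln.
case: (ltngtP l n) nln => // hln _.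
  by rewrite [q`__]nth_default ?mulr0 //; apply: leq_trans sq _; lia.
by rewrite [p`__]nth_default ?mul0r //; apply: leq_trans sp _; lia.
Qed.

Lemma deg_le_coefD p q n e e' :
  deg_le_coef p n e -> deg_le_coef q n e' -> deg_le_coef (p + q) n (e + e').
Proof.
move=> [sp cp] [sq cq]; split; last by rewrite coefD cp cq.
by apply: leq_trans (size_polyD _ _) _; rewrite geq_max sp sq.
Qed.

Lemma deg_le_coef0 n : deg_le_coef 0 n 0.
Proof. by split; rewrite ?size_poly0 ?coef0. Qed.

Lemma deg_le_coef1 : deg_le_coef 1 0 1.
Proof. by split; rewrite ?size_poly1 ?coef1. Qed.

Lemma deg_le_coefC c : deg_le_coef c%:P 0 c.
Proof. by split; rewrite ?size_polyC ?coefC //; case: (c != 0). Qed.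

Lemma deg_le_coef_linear c b : deg_le_coef (c%:P * 'X + b%:P) 1 c.
Proof.
split; last by rewrite coefD coefCM coefX coefC /= mulr1 addr0.
apply: leq_trans (size_polyD _ _) _; rewrite geq_max size_polyC.
apply/andP; split; last by case: (b != 0).
by apply: leq_trans (size_polyMleq _ _) _; rewrite size_polyX size_polyC; case: (c != 0).
Qed.

Lemma deg_le_coefX p k e : deg_le_coef p 1 e -> deg_le_coef (p ^+ k) k (e ^+ k).
Proof.
move=> dp; elim: k => [|k IHk]; first by rewrite !expr0; exact: deg_le_coef1.
by rewrite !exprS -add1n; apply: deg_le_coefM.
Qed.

Lemma deg_le_coef_prod (I : Type) (s : seq I) (G : I -> {poly R}) (w : I -> nat)
    (e : I -> R) :
  (forall i, deg_le_coef (G i) (w i) (e i)) ->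
  deg_le_coef (\prod_(i <- s) G i) (\sum_(i <- s) w i)%N (\prod_(i <- s) e i).
Proof.
move=> dG; elim: s => [|i s IHs]; first by rewrite !big_nil; exact: deg_le_coef1.
by rewrite !big_cons; apply: deg_le_coefM.
Qed.

Lemma deg_le_coef_sum (I : eqType) (s : seq I) (G : I -> {poly R}) n (e : I -> R) :
  (forall i, i \in s -> deg_le_coef (G i) n (e i)) ->
  deg_le_coef (\sum_(i <- s) G i) n (\sum_(i <- s) e i).
Proof.
elim: s => [|i s IHs] dG; first by rewrite !big_nil; exact: deg_le_coef0.
rewrite !big_cons; apply: deg_le_coefD; first by apply: dG; rewrite mem_head.
by apply: IHs => l sl; apply: dG; rewrite in_cons sl orbT.
Qed.

Lemma deg_le_coef0_size p n : deg_le_coef p n 0 -> (size p <= n)%N.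
Proof.
move=> [sp cp]; case: (ltngtP (size p) n.+1) sp => // sp _.
have : p != 0 by rewrite -size_poly_eq0 sp.
by rewrite -lead_coef_eq0 lead_coefE sp /= cp eqxx.
Qed.

End DegLeCoef.

Definition ord3_enum (i j k : 'I_3) :=
  [/\ j != i, k != i, k != j & forall l : 'I_3, [|| l == i, l == j | l == k]].

Lemma ord3_enum_ex (i : 'I_3) : exists j k, ord3_enum i j k.
Proof.
pose o (m : nat) (hm : (m < 3)%N) : 'I_3 := Ordinal hm.
by case: i => [[|[|[|]]]] // hi;
  [exists (o 1 isT), (o 2 isT) | exists (o 0 isT), (o 2 isT) | exists (o 0 isT), (o 1 isT)];
  split => //; case => [[|[|[|]]]].
Qed.

Lemma sum_ord3_enum (V : nmodType) i j k (G : 'I_3 -> V) :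
  ord3_enum i j k -> \sum_l G l = G i + G j + G k.
Proof.
case=> ji ki kj cover; rewrite (bigD1 i) //= (bigD1 j) //= (bigD1 k) /=; last by rewrite kj ki.
rewrite big1 ?addr0 ?addrA // => l /andP [/andP [li lj] lk].
by move: (cover l); rewrite (negbTE li) (negbTE lj) (negbTE lk).
Qed.

Section ProjectivePlane.
Variable F : finFieldType.
Implicit Types (u v w : {ffun 'I_3 -> F}) (a : 'I_3 -> F).

Lemma P2_neq0 v : v \in P2 F -> exists i, v i != 0.
Proof. by rewrite inE => /existsP [i /andP [/eqP vi _]]; exists i; rewrite vi oner_eq0. Qed.

Lemma P2_proportional_eq v w (x : F) :
  v \in P2 F -> w \in P2 F -> (forall l, w l = x * v l) -> w = v.
Proof.
rewrite !inE => /existsP [iv /andP [/eqP v1 /forallP v0]].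
move=> /existsP [iw /andP [/eqP w1 /forallP w0]] wxv.
suff x1 : x = 1 by apply/ffunP => l; rewrite wxv x1 mul1r.
case: (ltngtP iv iw) => [ivw|iwv|/val_inj ivw].
- by move: (w0 iv) w1; rewrite ivw /= !wxv v1 mulr1 => /eqP ->; rewrite mul0r.
- move: (v0 iw) w1; rewrite iwv /= wxv => /eqP ->.
  by rewrite mulr0 => /esym/eqP; rewrite oner_eq0.
- by rewrite -w1 wxv -ivw v1 mulr1.
Qed.

Lemma on_lineC a (v : 'I_3 -> F) : on_line a v = on_line v a.
Proof. by rewrite /on_line; under eq_bigr => l _ do rewrite mulrC. Qed.

Lemma P2_rescale a : (exists i, a i != 0) ->
  exists2 b, b \in P2 F & forall v : 'I_3 -> F, on_line b v = on_line a v.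
Proof.
move=> [i0 ai0].
have [i ai imin] := @arg_minnP _ i0 (fun i => a i != 0) (fun i : 'I_3 => val i) ai0.
exists [ffun l => (a i)^-1 * a l].
  rewrite inE; apply/existsP; exists i; rewrite ffunE mulVf // eqxx /=.
  apply/forallP => j; apply/implyP => ji; rewrite ffunE.
  have [->|aj] := eqVneq (a j) 0; first by rewrite mulr0.
  by have := imin j aj; rewrite leqNgt ji.
move=> v; rewrite /on_line; under eq_bigr => l _ do rewrite ffunE -mulrA.
by rewrite -mulr_sumr mulf_eq0 invr_eq0 (negbTE ai).
Qed.

(* The line is a nonzero vector in the left kernel of the 3x2 matrix with
   columns u and w, which has rank at most 2. *)
Lemma exists_common_line (u w : 'I_3 -> F) :
  exists2 a, a \in P2 F & on_line a u && on_line a w.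
Proof.
pose M : 'M[F]_(3, 2) := \matrix_(l, m) (if m == ord0 then u l else w l).
have : kermx M != 0.
  rewrite -mxrank_eq0 mxrank_ker subn_eq0 -ltnNge.
  exact: leq_ltn_trans (rank_leq_col M) _.
case/matrix0Pn => r [l Krl].
have [a aP aE] := P2_rescale (ex_intro _ l Krl).
exists a => //; rewrite !aE /on_line.
have KM (m : 'I_2) : \sum_l kermx M r l * (if m == ord0 then u l else w l) = 0.
  have /matrixP/(_ r m) := mulmx_ker M; rewrite mxE [RHS]mxE.
  by under eq_bigr do rewrite [M _ _]mxE.
by move: (KM ord0) (KM (lift ord0 ord0)) => /= -> ->; rewrite eqxx.
Qed.

End ProjectivePlane.

Section Line.
Variables (F : finFieldType) (a : 'I_3 -> F) (i j k : 'I_3).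
Hypotheses (ijk : ord3_enum i j k) (ai : a i = 1).
Implicit Types v w : {ffun 'I_3 -> F}.

(* The points of the line with (X_j, X_k) = (1, 0) and (0, 1). *)
Definition line_ptj (l : 'I_3) : F := if l == i then - a j else if l == j then 1 else 0.
Definition line_ptk (l : 'I_3) : F := if l == i then - a k else if l == k then 1 else 0.

Lemma on_line_decomp (v : 'I_3 -> F) :
  on_line a v -> forall l, v l = v j * line_ptj l + v k * line_ptk l.
Proof.
have [ji ki kj cover] := ijk.
rewrite /on_line (sum_ord3_enum _ ijk) ai mul1r => /eqP av0.
have vi : v i = - (a j * v j + a k * v k).
  by apply/eqP; rewrite -subr_eq0 opprK -av0; apply/eqP; ring.
move=> l; rewrite /line_ptj /line_ptk.
case/or3P: (cover l) => /eqP ->; rewrite ?eqxx ?(negbTE ji) ?(negbTE ki) ?(negbTE kj) ?vi.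
- ring.
- rewrite eq_sym (negbTE kj); ring.
- ring.
Qed.

Lemma on_line_eq_affine v w : v \in P2 F -> w \in P2 F -> on_line a v -> on_line a w ->
  v k != 0 -> w k != 0 -> v j / v k = w j / w k -> w = v.
Proof.
move=> vP wP va wa vk wk vw.
apply: (P2_proportional_eq (x := w k / v k)) => // l.
rewrite (on_line_decomp va l) (on_line_decomp wa l).
have -> : w j = v j / v k * w k by rewrite vw mulfVK.
by field.
Qed.

Lemma on_line_eq_infinity v w : v \in P2 F -> w \in P2 F -> on_line a v -> on_line a w ->
  v k = 0 -> w k = 0 -> w = v.
Proof.
move=> vP wP va wa vk wk.
have vj : v j != 0.
  apply/eqP => vj; have [l] := P2_neq0 vP.
  by rewrite (on_line_decomp va) vj vk !mul0r addr0 eqxx.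
apply: (P2_proportional_eq (x := w j / v j)) => // l.
by rewrite (on_line_decomp va l) (on_line_decomp wa l) vk wk !mul0r !addr0; field.
Qed.

(* Affine points are recorded by their coordinate v j / v k, and there is
   at most one point with v k = 0. *)
Lemma card_on_line : (#|[set v in P2 F | on_line a v]| <= #|F|.+1)%N.
Proof.
pose f v : option F := if v k == 0 then None else Some (v j / v k).
rewrite -(card_in_imset (f := f)); last first.
  move=> v w /setIdP [vP va] /setIdP [wP wa]; rewrite /f.
  case: (eqVneq (v k) 0) => vk; case: (eqVneq (w k) 0) => wk //.
  - by move=> _; apply/esym/on_line_eq_infinity.
  - by move=> [] vw; apply/esym/on_line_eq_affine.
by rewrite -card_option max_card.
Qed.

End Line.

Section RestrictionToLine.
Variables (F : finFieldType) (P : {mpoly F[3]}) (d : nat).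
Variables (a : 'I_3 -> F) (i j k : 'I_3).
Hypotheses (hP : P \is d.-homog) (ijk : ord3_enum i j k) (ai : a i = 1).

Let c := line_ptj a i j.
Let b := line_ptk a i k.
Let R := [set v in rat_points P | on_line a v].

(* P restricted to the line, in the affine parameter t = X_j / X_k. *)
Let g : {poly F} := mmap (@polyC F) (fun l => (c l)%:P * 'X + (b l)%:P) P.

Lemma horner_restr t : g.[t] = P.@[fun l => t * c l + b l].
Proof.
rewrite -horner_evalE rmorph_mmap; apply: mmap_ext => [x|l] /=.
  by rewrite horner_evalE hornerC.
by rewrite horner_evalE hornerD hornerMX !hornerC mulrC.
Qed.

Lemma restr_deg_le_coef : deg_le_coef g d P.@[c].
Proof.
rewrite /g /mmap mevalE; apply: deg_le_coef_sum => m /(dhomogP _ _ _ hP) md.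
have {}md : (\sum_l m l = d)%N by rewrite -mdegE; exact: md.
rewrite -[d]add0n; apply: deg_le_coefM; first exact: deg_le_coefC.
rewrite -md; apply: deg_le_coef_prod => l.
by apply: deg_le_coefX; apply: deg_le_coef_linear.
Qed.

Lemma mem_curve_line v : v \in R -> [/\ v \in P2 F, P.@[v] = 0 & on_line a v].
Proof. by move=> /setIdP [/setIdP [vP /eqP v0] va]. Qed.

Lemma root_restr v : v \in R -> v k != 0 -> root g (v j / v k).
Proof.
move=> /mem_curve_line [_ v0 va] vk.
have vE : (fun l => v j / v k * c l + b l) =1 (fun l => (v k)^-1 * v l).
  by move=> l; rewrite (on_line_decomp ijk ai va l) mulrDr mulrA [_^-1 * _]mulrC mulKf.
by rewrite /root horner_restr (meval_eq P vE) (meval_homog _ _ hP) v0 mulr0.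
Qed.

Lemma curve_line_infinity v : v \in R -> v k = 0 -> P.@[c] = 0.
Proof.
move=> /mem_curve_line [vP v0 va] vk.
have vE : (fun l => v l) =1 (fun l => v j * c l).
  by move=> l; rewrite (on_line_decomp ijk ai va l) vk mul0r addr0.
have vj : v j != 0.
  apply/eqP => vj; have [l] := P2_neq0 vP.
  by rewrite (on_line_decomp ijk ai va l) vj vk !mul0r addr0 eqxx.
move: v0; rewrite (meval_eq P vE) (meval_homog _ _ hP) => /eqP.
by rewrite mulf_eq0 expf_eq0 (negbTE vj) andbF => /eqP.
Qed.

(* The coefficient P(line_ptj) of t^d in g vanishes exactly when the point at
   infinity line_ptj is on the curve; either way g has more roots than its
   degree allows. *)
Lemma restr_eq0 : (d < #|R|)%N -> g = 0.
Proof.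
move=> dR; set B := [set v : {ffun 'I_3 -> F} | v k != 0].
set rs := [seq v j / v k | v : {ffun 'I_3 -> F} <- enum (R :&: B)].
have rs_root : all (root g) rs.
  apply/allP => x /mapP [v]; rewrite mem_enum => /setIP [vR]; rewrite inE => vk ->.
  exact: root_restr.
have rs_uniq : uniq rs.
  rewrite map_inj_in_uniq ?enum_uniq // => v w; rewrite !mem_enum.
  move=> /setIP [/mem_curve_line [vP _ va]]; rewrite inE => vk.
  move=> /setIP [/mem_curve_line [wP _ wa]]; rewrite inE => wk vw.
  exact/esym/(on_line_eq_affine ijk ai).
apply: (roots_geq_poly_eq0 rs_root rs_uniq); rewrite size_map -cardE.
have [sg cg] := restr_deg_le_coef.
have [Pc0|Pc] := eqVneq P.@[c] 0.
- have sg' : (size g <= d)%N by apply: deg_le_coef0_size; split; rewrite // cg.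
  have R_inf : (#|R :\: B| <= 1)%N.
    apply/card_le1_eqP => v w.
    move=> /setDP [/mem_curve_line [vP _ va]]; rewrite inE negbK => /eqP vk.
    move=> /setDP [/mem_curve_line [wP _ wa]]; rewrite inE negbK => /eqP wk.
    exact/esym/(on_line_eq_infinity ijk ai).
  apply: leq_trans sg' _; rewrite -ltnS (leq_trans dR) // -(cardsID B R).
  by rewrite -(addn1 #|R :&: B|) leq_add2l.
- have RB : R \subset B.
    apply/subsetP => v vR; rewrite inE; apply/eqP => vk.
    by move/eqP: Pc; apply; apply: curve_line_infinity vR vk.
  by rewrite (setIidPl RB); apply: leq_trans sg dR.
Qed.

Let sigma (l : 'I_3) : {mpoly F[3]} := (c l)%:MP * 'X_j + (b l)%:MP * 'X_k.

(* In the fraction field, P(sigma) = X_k^d g(X_j / X_k) by homogeneity. *)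
Lemma subst_line_eq0 : g = 0 -> mmap (@mpolyC 3 F) sigma P = 0.
Proof.
move=> g0.
pose xk : {fraction {mpoly F[3]}} := tofrac 'X_k.
pose rho := horner_eval (tofrac 'X_j / xk) \o map_poly (@tofrac _ \o @mpolyC 3 F).
have xk0 : xk != 0.
  rewrite tofrac_eq0; apply/eqP => Xk0.
  by have /eqP := mevalXU (fun=> (1 : F)) k; rewrite Xk0 meval0 eq_sym oner_eq0.
have rhoC x : rho x%:P = tofrac x%:MP.
  by rewrite /rho /= horner_evalE map_polyC hornerC.
have rho_lin l : rho ((c l)%:P * 'X + (b l)%:P) = xk^-1 * tofrac (sigma l).
  rewrite /rho /= horner_evalE rmorphD rmorphM /= !map_polyC map_polyX.
  rewrite hornerD hornerCM hornerX hornerC /sigma rmorphD !rmorphM /= mulrDr.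
  by congr (_ + _); [rewrite mulrA mulrC | rewrite [RHS]mulrC mulfK].
have := rmorph_mmap rho (@polyC F) (fun l => (c l)%:P * 'X + (b l)%:P) P.
rewrite -/g g0 rmorph0 (mmap_ext _ rhoC rho_lin) (mmap_homog _ _ _ hP) -rmorph_mmap.
move=> /esym /eqP; rewrite mulf_eq0 expf_eq0 invr_eq0 (negbTE xk0) andbF /=.
by rewrite tofrac_eq0 => /eqP.
Qed.

(* X_l - sigma l = L * [l == i] for the linear form L of the line, so P is
   congruent modulo L to P(sigma) = 0. *)
Lemma line_dvd_of_many_points : (d < #|R|)%N -> mdivides (linform a) P.
Proof.
move=> dR; have Psigma0 := subst_line_eq0 (restr_eq0 dR).
have [r Pr] : divides (linform a) (P - mmap (@mpolyC 3 F) sigma P).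
  apply: divides_mmapB => l; have [ji ki kj cover] := ijk.
  rewrite /sigma /c /b /line_ptj /line_ptk.
  case/or3P: (cover l) => /eqP ->; rewrite ?eqxx ?(negbTE ji) ?(negbTE ki) ?(negbTE kj).
  - exists 1; rewrite mulr1 /linform (sum_ord3_enum _ ijk) ai !rmorphN rmorph1; ring.
  - by rewrite eq_sym (negbTE kj); exists 0; rewrite mulr0 rmorph1 rmorph0; ring.
  - by exists 0; rewrite mulr0 rmorph1 rmorph0; ring.
by exists r; rewrite -Pr Psigma0 subr0.
Qed.

End RestrictionToLine.

Lemma card_bigcup_le (T I : finType) (A : {set I}) (B : I -> {set T}) :
  (#|\bigcup_(x in A) B x| <= \sum_(x in A) #|B x|)%N.
Proof.
elim/big_rec2: _ => [|x n U _ IH]; first by rewrite cards0.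
by apply: leq_trans (leq_card_setU _ _) _; rewrite leq_add2l.
Qed.

Section Pencil.
Variable F : finFieldType.

Lemma card_lines_through (p : {ffun 'I_3 -> F}) :
  p \in P2 F -> (#|[set a in P2 F | on_line a p]| <= #|F|.+1)%N.
Proof.
rewrite inE => /existsP [i /andP [/eqP pi _]].
have [j [k ijk]] := ord3_enum_ex i.
have -> : [set a in P2 F | on_line a p] = [set v in P2 F | on_line p v].
  by apply/setP => v; rewrite !inE on_lineC.
exact: card_on_line ijk pi.
Qed.

Lemma card_le_pencil (S : {set {ffun 'I_3 -> F}}) p n : S \subset P2 F -> p \in S ->
  (forall a, a \in P2 F -> #|[set v in S | on_line a v]| <= n.+1)%N ->
  (#|S| <= 1 + #|F|.+1 * n)%N.
Proof.
move=> SP pS Sa; set A := [set a in P2 F | on_line a p].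
have cover : S :\ p \subset \bigcup_(a in A) ([set v in S | on_line a v] :\ p).
  apply/subsetP => v /setD1P [vp vS].
  have [a aP /andP [ap av]] := exists_common_line p v.
  by apply/bigcupP; exists a; [apply/setIdP | rewrite in_setD1 vp; apply/setIdP].
have line_le a : a \in A -> (#|[set v in S | on_line a v] :\ p| <= n)%N.
  case/setIdP => aP ap; have := Sa a aP.
  by rewrite (cardsD1 p) inE pS ap add1n ltnS.
rewrite (cardsD1 p S) pS add1n ltnS.
apply: leq_trans (subset_leq_card cover) _.
apply: leq_trans (card_bigcup_le _ _) _.
apply: leq_trans (leq_sum _ line_le) _.
by rewrite sum_nat_const leq_mul2r card_lines_through ?orbT // (subsetP SP).
Qed.

End Pencil.

Lemma card_rat_points_on_line (F : finFieldType) (P : {mpoly F[3]}) d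
    (a : {ffun 'I_3 -> F}) :
  P \is d.-homog -> no_Fq_linear_component P -> a \in P2 F ->
  (#|[set v in rat_points P | on_line a v]| <= d)%N.
Proof.
move=> hP nolin; rewrite inE => /existsP [i /andP [/eqP ai _]].
have [j [k ijk]] := ord3_enum_ex i.
rewrite leqNgt; apply/negP => /(line_dvd_of_many_points hP ijk ai).
by apply: nolin; exists i; rewrite ai oner_eq0.
Qed.

Theorem lemma3p2 (F : finFieldType) (P : {mpoly F[3]}) :
  (5 <= #|F|)%N ->
  P != 0 -> P \is (#|F|.-1).-homog ->
  no_Fq_linear_component P ->
  #|rat_points P| = (#|F|.-1 ^ 2)%N ->
  is_arc (rat_points P) (#|F|.-1 ^ 2) (#|F|.-1).
Proof.
move=> q5 _ hP nolin cardS; set S := rat_points P.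
have line_le a : a \in P2 F -> (#|[set v in S | on_line a v]| <= #|F|.-1)%N.
  exact: card_rat_points_on_line hP nolin.
have SP : S \subset P2 F by apply/subsetP => v /setIdP [].
split => //.
pose full a := (a \in P2 F) && (#|[set v in S | on_line a v]| == #|F|.-1).
have [a /andP [aP /eqP Sa] | no_full] := pickP full; first by exists a.
have [p pS] : exists p, p \in S by apply/card_gt0P; rewrite cardS expn_gt0; lia.
have line_lt a : a \in P2 F -> (#|[set v in S | on_line a v]| <= (#|F| - 3).+1)%N.
  by move=> aP; have := line_le a aP; have := no_full a; rewrite /full aP /=; lia.
by have := card_le_pencil SP pS line_lt; rewrite cardS; nia.
Qed.
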